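(* Let $(X,d)$ be a u.l.f. metric space and $h\colon X\to\mathbb{R}$ a coarse map. Then the action $\sigma_h$ of $\mathbb{R}$ on $\mathrm{C}^*_u(X)$ given by $\sigma_{h,t}(a)=e^{it\bar h}ae^{-it\bar h}$ is strongly continuous, i.e., $t\mapsto\sigma_{h,t}(a)\in\mathrm{C}^*_u(X)$ is norm continuous for all $a\in\mathrm{C}^*_u(X)$.
   Context: A metric space is u.l.f. if for every $r>0$ the cardinalities of its balls of radius $r$ are uniformly bounded. $\mathrm{C}^*_u(X)$ is the norm closure of the $^*$-algebra of operators $a$ on $\ell_2(X)$ with $\sup\{d(x,y):\langle a\delta_y,\delta_x\rangle\neq0\}<\infty$. $h$ is coarse if for each $r>0$ there is $s>0$ with $d(x,y)<r\Rightarrow|h(x)-h(y)|<s$. $e^{it\bar h}$ is the diagonal unitary $\delta_x\mapsto e^{ith(x)}\delta_x$. *)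

From Stdlib Require Import Reals List ClassicalEpsilon.
From Coquelicot Require Import Coquelicot.
Open Scope R_scope.

Section Defs.
Variable X : Type.

Definition is_metric (d : X -> X -> R) : Prop :=
  (forall x y, 0 <= d x y) /\ (forall x y, d x y = 0 <-> x = y) /\
  (forall x y, d x y = d y x) /\ (forall x y z, d x z <= d x y + d y z).

Definition ulf (d : X -> X -> R) : Prop :=
  forall r, 0 < r -> exists N : nat, forall x, exists l : list X,
    (length l <= N)%nat /\ forall y, d x y < r -> In y l.

Definition coarse (d : X -> X -> R) (h : X -> R) : Prop :=
  forall r, 0 < r -> exists s, 0 < s /\
    forall x y, d x y < r -> Rabs (h x - h y) < s.

Definition sumsq (f : X -> C) (l : list X) : R :=
  fold_right (fun x acc => Cmod (f x) ^ 2 + acc) 0 l.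

(* ||f||_2 <= c  (sum over X = sup of finite partial sums) *)
Definition l2norm_le (f : X -> C) (c : R) : Prop :=
  0 <= c /\ forall l, NoDup l -> sumsq f l <= c ^ 2.

Definition l2 (f : X -> C) : Prop := exists c, l2norm_le f c.

Definition op := (X -> C) -> (X -> C).

Definition opnorm_le (T : op) (c : R) : Prop :=
  0 <= c /\ forall f m, l2 f -> l2norm_le f m -> l2norm_le (T f) (c * m).

(* bounded linear operator on l2(X) (only its behaviour on l2 matters) *)
Definition bdd_op (T : op) : Prop :=
  (forall f g, l2 f -> l2 g -> forall x, T (fun y => Cplus (f y) (g y)) x = Cplus (T f x) (T g x)) /\
  (forall (k : C) f, l2 f -> forall x, T (fun y => Cmult k (f y)) x = Cmult k (T f x)) /\
  (exists c, opnorm_le T c).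

Definition opsub (S T : op) : op := fun f x => Cminus (S f x) (T f x).

Definition delta (y : X) : X -> C :=
  fun x => if excluded_middle_informative (x = y) then RtoC 1 else RtoC 0.

Definition finite_prop (d : X -> X -> R) (T : op) : Prop :=
  exists Rp, forall x y, T (delta y) x <> RtoC 0 -> d x y <= Rp.

Definition in_Cu (d : X -> X -> R) (a : op) : Prop :=
  bdd_op a /\ forall eps, 0 < eps ->
    exists b, bdd_op b /\ finite_prop d b /\ opnorm_le (opsub a b) eps.

Definition expi (th : R) : C := (cos th, sin th).

Definition expdiag (h : X -> R) (t : R) : op :=
  fun f x => Cmult (expi (t * h x)) (f x).

Definition sigma_act (h : X -> R) (t : R) (a : op) : op :=
  fun f => expdiag h t (a (expdiag h (- t) f)).
End Defs.

(* Since conjugation by a diagonal unitary preserves propagation, σ_t maps C*_u(X) to itself,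
   and by a 3ε argument it suffices to show that t ↦ σ_t(b) is Lipschitz in norm for b of
   finite propagation R.  Write h = ⌊h⌋ + {h}.  Coarseness gives m with |⌊h y⌋ - ⌊h x⌋| < m
   whenever d(x,y) ≤ R, so if ℓ²(X) is split according to ⌊h⌋ mod (2m+1), then for a fixed x
   every y that b couples to x inside one piece has ⌊h y⌋ = ⌊h x⌋ + k for a single k with
   |k| ≤ m.  On such a piece the factor e^{-it⌊h y⌋} is a constant that pulls out of b, and
   what remains, e^{it({h x} - k)} b e^{-it{h}}, depends on t with Lipschitz constant
   (m + 2) ‖b‖.  Summing the 2m + 1 pieces bounds ‖σ_t(b) - σ_{t0}(b)‖ by
   (2m + 1)(m + 2) ‖b‖ |t - t0|. *)

From Stdlib Require Import Reals Lra Lia ZArith List Classical ClassicalEpsilon FunctionalExtensionality.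
From Coquelicot Require Import Coquelicot.
Open Scope R_scope.

Definition rsum {A : Type} (w : A -> R) (L : list A) : R :=
  fold_right (fun i acc => w i + acc) 0 L.

Lemma rsum_ge0 {A : Type} (w : A -> R) L : (forall i, 0 <= w i) -> 0 <= rsum w L.
Proof. intros Hw; induction L as [|i L IH]; simpl; [lra|]. specialize (Hw i); lra. Qed.

Section RealL2.
Context {X : Type}.

Definition rsumsq (u : X -> R) (l : list X) : R :=
  fold_right (fun x acc => u x ^ 2 + acc) 0 l.

(* [l2norm_le X f c] is convertible to [rl2norm_le (fun x => Cmod (f x)) c]. *)
Definition rl2norm_le (u : X -> R) (c : R) : Prop :=
  0 <= c /\ forall l, NoDup l -> rsumsq u l <= c ^ 2.

Lemma rsumsq_app (u : X -> R) l l' : rsumsq u (l ++ l') = rsumsq u l + rsumsq u l'.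
Proof. induction l as [|x l IH]; simpl; [ring|]. rewrite IH; ring. Qed.

Lemma rsumsq_le_scale (u v : X -> R) k l :
  (forall x, 0 <= v x <= k * u x) -> rsumsq v l <= k ^ 2 * rsumsq u l.
Proof.
  intros Hv; induction l as [|x l IH]; simpl; [lra|].
  specialize (Hv x). assert (v x ^ 2 <= k ^ 2 * u x ^ 2) by nra. nra.
Qed.

(* Peter-Paul: [2 u v <= lam u^2 + v^2 / lam]. *)
Lemma rsumsq_le_add (u v w : X -> R) lam l :
  0 < lam -> (forall x, 0 <= u x) -> (forall x, 0 <= v x) ->
  (forall x, 0 <= w x <= u x + v x) ->
  rsumsq w l <= (1 + lam) * rsumsq u l + (1 + / lam) * rsumsq v l.
Proof.
  intros Hlam Hu Hv Hw; induction l as [|x l IH]; simpl; [lra|].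
  specialize (Hw x); specialize (Hu x); specialize (Hv x).
  assert (Hpp : 2 * u x * v x <= lam * u x ^ 2 + / lam * v x ^ 2).
  { assert (0 <= / lam * (lam * u x - v x) ^ 2)
      by (apply Rmult_le_pos; [apply Rlt_le, Rinv_0_lt_compat; lra | apply pow2_ge_0]).
    assert (/ lam * (lam * u x - v x) ^ 2 = lam * u x ^ 2 - 2 * u x * v x + / lam * v x ^ 2)
      by (field; lra).
    lra. }
  assert (w x ^ 2 <= (u x + v x) ^ 2) by nra.
  nra.
Qed.

Lemma rl2norm_le_pointwise (u : X -> R) c x : rl2norm_le u c -> 0 <= u x -> u x <= c.
Proof.
  intros [Hc H] Hx.
  assert (u x ^ 2 + 0 <= c ^ 2) by (apply (H (x :: nil)); repeat constructor; simpl; tauto).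
  nra.
Qed.

Lemma rl2norm_le_weaken (u : X -> R) c c' : rl2norm_le u c -> c <= c' -> rl2norm_le u c'.
Proof. intros [Hc H] Hle; split; [lra|]. intros l Hl. specialize (H l Hl). nra. Qed.

Lemma rl2norm_le_scale (u v : X -> R) k c :
  rl2norm_le u c -> 0 <= k -> (forall x, 0 <= v x <= k * u x) -> rl2norm_le v (k * c).
Proof.
  intros [Hc H] Hk Hv. split; [nra|]. intros l Hl.
  pose proof (rsumsq_le_scale u v k l Hv). specialize (H l Hl).
  assert (k ^ 2 * rsumsq u l <= k ^ 2 * c ^ 2) by (apply Rmult_le_compat_l; nra).
  nra.
Qed.

Lemma rl2norm_le_dom (u v : X -> R) c :
  rl2norm_le u c -> (forall x, 0 <= v x <= u x) -> rl2norm_le v c.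
Proof.
  intros Hu Hv. replace c with (1 * c) by ring.
  apply (rl2norm_le_scale u); [auto | lra |]. intros x; rewrite Rmult_1_l; auto.
Qed.

Lemma rl2norm_le_add (u v w : X -> R) a b :
  rl2norm_le u a -> rl2norm_le v b -> (forall x, 0 <= u x) -> (forall x, 0 <= v x) ->
  (forall x, 0 <= w x <= u x + v x) -> rl2norm_le w (a + b).
Proof.
  intros Ha Hb Hu Hv Hw.
  destruct (Req_dec a 0) as [->|Na].
  { rewrite Rplus_0_l. apply (rl2norm_le_dom v); auto. intros x.
    pose proof (rl2norm_le_pointwise u 0 x Ha (Hu x)). specialize (Hw x); specialize (Hu x). lra. }
  destruct (Req_dec b 0) as [->|Nb].
  { rewrite Rplus_0_r. apply (rl2norm_le_dom u); auto. intros x.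
    pose proof (rl2norm_le_pointwise v 0 x Hb (Hv x)). specialize (Hw x); specialize (Hv x). lra. }
  destruct Ha as [Ha0 Ha], Hb as [Hb0 Hb].
  split; [lra|]. intros l Hl.
  assert (Hpa : 0 < a) by lra. assert (Hpb : 0 < b) by lra.
  pose proof (rsumsq_le_add u v w (b / a) l ltac:(apply Rdiv_lt_0_compat; lra) Hu Hv Hw) as H.
  specialize (Ha l Hl); specialize (Hb l Hl).
  replace (1 + b / a) with ((a + b) / a) in H by (field; lra).
  replace (1 + / (b / a)) with ((a + b) / b) in H by (field; lra).
  assert ((a + b) / a * rsumsq u l <= (a + b) / a * a ^ 2)
    by (apply Rmult_le_compat_l; [apply Rlt_le, Rdiv_lt_0_compat|]; lra).
  assert ((a + b) / b * rsumsq v l <= (a + b) / b * b ^ 2)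
    by (apply Rmult_le_compat_l; [apply Rlt_le, Rdiv_lt_0_compat|]; lra).
  assert ((a + b) / a * a ^ 2 + (a + b) / b * b ^ 2 = (a + b) ^ 2) by (field; lra).
  lra.
Qed.

Lemma rl2norm_le_sum {A : Type} (F : A -> X -> R) L c :
  (forall i y, 0 <= F i y) -> 0 <= c -> (forall i, In i L -> rl2norm_le (F i) c) ->
  rl2norm_le (fun x => rsum (fun i => F i x) L) (INR (length L) * c).
Proof.
  intros HF Hc; induction L as [|i L IH]; intros HL.
  - split; [simpl; lra|]. intros l _. simpl.
    induction l as [|x l IHl]; simpl; [lra|]. nra.
  - replace (INR (length (i :: L)) * c) with (c + INR (length L) * c)
      by (simpl length; rewrite S_INR; ring).
    apply (rl2norm_le_add (F i) (fun x => rsum (fun j => F j x) L)).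
    + apply HL; simpl; auto.
    + apply IH. intros; apply HL; simpl; auto.
    + auto.
    + intros; apply rsum_ge0; auto.
    + intros x; simpl. pose proof (rsum_ge0 (fun j => F j x) L (fun j => HF j x)).
      specialize (HF i x). lra.
Qed.

End RealL2.

Lemma Rabs_sin_le y : Rabs (sin y) <= Rabs y.
Proof.
  assert (Hpos : forall z, 0 <= z -> Rabs (sin z) <= z).
  { intros z Hz. destruct (Req_dec z 0) as [->|Nz]; [rewrite sin_0, Rabs_R0; lra|].
    pose proof (sin_lt_x z ltac:(lra)).
    destruct (Rle_lt_dec z 1).
    - assert (0 <= sin z) by (apply sin_ge_0; pose proof PI2_1; lra).
      rewrite Rabs_pos_eq; lra.
    - pose proof (SIN_bound z). apply Rabs_le; lra. }
  destruct (Rle_lt_dec 0 y).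
  - rewrite (Rabs_pos_eq y) by lra. auto.
  - pose proof (Hpos (- y) ltac:(lra)) as H. rewrite sin_neg, Rabs_Ropp in H.
    rewrite (Rabs_left y) by lra. exact H.
Qed.

Lemma Cmod_expi t : Cmod (expi t) = 1.
Proof.
  unfold Cmod, expi; simpl. pose proof (sin2_cos2 t) as H. unfold Rsqr in H.
  replace (cos t * (cos t * 1) + sin t * (sin t * 1)) with 1 by lra. apply sqrt_1.
Qed.

Lemma Cmod_expi_mult t z : Cmod (expi t * z) = Cmod z.
Proof. rewrite Cmod_mult, Cmod_expi; ring. Qed.

Lemma expi_add a b : expi (a + b) = (expi a * expi b)%C.
Proof. unfold expi, Cmult; simpl. rewrite cos_plus, sin_plus. f_equal; ring. Qed.

(* The chord [|e^{ia} - e^{ib}| = 2 |sin ((a - b) / 2)|] is shorter than the arc. *)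
Lemma Cmod_expi_sub_le a b : Cmod (expi a - expi b) <= Rabs (a - b).
Proof.
  unfold Cmod, expi, Cminus, Cplus, Copp; simpl.
  set (y := (a - b) / 2).
  assert (E : cos (a - b) = 1 - 2 * sin y * sin y)
    by (rewrite <- cos_2a_sin; f_equal; unfold y; field).
  rewrite cos_minus in E.
  pose proof (sin2_cos2 a); pose proof (sin2_cos2 b). unfold Rsqr in *.
  replace ((cos a + - cos b) * ((cos a + - cos b) * 1) + (sin a + - sin b) * ((sin a + - sin b) * 1))
    with (4 * (sin y * sin y)) by nra.
  replace (Rabs (a - b)) with (2 * Rabs y)
    by (unfold y; rewrite Rabs_div, (Rabs_pos_eq 2) by lra; field).
  rewrite <- (sqrt_Rsqr (2 * Rabs y)) by (pose proof (Rabs_pos y); lra).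
  apply sqrt_le_1_alt. unfold Rsqr.
  pose proof (Rabs_sin_le y). pose proof (Rabs_pos (sin y)).
  assert (sin y * sin y = Rabs (sin y) * Rabs (sin y))
    by (rewrite <- Rabs_mult, Rabs_pos_eq; nra).
  nra.
Qed.

Lemma Cmod_phase_diff_le t t0 th (A B : C) :
  Cmod (expi (t * th) * A - expi (t0 * th) * B) <= Rabs (t - t0) * Rabs th * Cmod A + Cmod (A - B).
Proof.
  replace (expi (t * th) * A - expi (t0 * th) * B)%C
    with ((expi (t * th) - expi (t0 * th)) * A + expi (t0 * th) * (A - B))%C by ring.
  eapply Rle_trans; [apply Cmod_triangle|].
  rewrite Cmod_mult, Cmod_expi_mult.
  pose proof (Cmod_expi_sub_le (t * th) (t0 * th)) as H.
  replace (t * th - t0 * th) with ((t - t0) * th) in H by ring. rewrite Rabs_mult in H.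
  pose proof (Cmod_ge_0 A). nra.
Qed.

Definition Csum {A : Type} (G : A -> C) (L : list A) : C :=
  fold_right (fun i acc => G i + acc)%C 0%C L.

Lemma Cmod_Csum_le {A : Type} (G : A -> C) (w : A -> R) L :
  (forall i, Cmod (G i) <= w i) -> Cmod (Csum G L) <= rsum w L.
Proof.
  intros H; induction L as [|i L IH]; simpl; [rewrite Cmod_0; lra|].
  eapply Rle_trans; [apply Cmod_triangle|]. specialize (H i); lra.
Qed.

Lemma Csum_zero {A : Type} (G : A -> C) L : (forall i, In i L -> G i = 0%C) -> Csum G L = 0%C.
Proof.
  induction L as [|i L IH]; simpl; intros H; [reflexivity|].
  rewrite H, IH by auto. ring.
Qed.

Lemma Csum_single {A : Type} (G : A -> C) L a :
  NoDup L -> In a L -> (forall i, In i L -> i <> a -> G i = 0%C) -> Csum G L = G a.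
Proof.
  intros Hn; induction Hn as [|i L Hi Hn IH]; simpl; [tauto|]. intros [->|Ha] H.
  - rewrite Csum_zero; [ring|]. intros j Hj. apply H; [simpl; auto|]. intros ->; tauto.
  - rewrite H, IH; [ring| auto | intros; apply H; simpl; auto | simpl; auto |].
    intros ->; tauto.
Qed.

Section ComplexL2.
Context {X : Type}.

Definition vsum {A : Type} (F : A -> X -> C) (L : list A) : X -> C :=
  fun y => Csum (fun i => F i y) L.

Lemma l2norm_le_ge0 (f : X -> C) c : l2norm_le X f c -> 0 <= c.
Proof. intros [H _]; exact H. Qed.

Lemma l2_intro (f : X -> C) c : l2norm_le X f c -> l2 X f.
Proof. intros H; exists c; exact H. Qed.

Lemma l2norm_le_scale (f g : X -> C) c k :
  l2norm_le X f c -> 0 <= k -> (forall x, Cmod (g x) <= k * Cmod (f x)) ->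
  l2norm_le X g (k * c).
Proof.
  intros Hf Hk H. apply (rl2norm_le_scale _ _ k c Hf Hk).
  intros x; split; [apply Cmod_ge_0 | auto].
Qed.

Lemma l2norm_le_dom (f g : X -> C) c :
  l2norm_le X f c -> (forall x, Cmod (g x) <= Cmod (f x)) -> l2norm_le X g c.
Proof.
  intros Hf H. apply (rl2norm_le_dom _ _ c Hf).
  intros x; split; [apply Cmod_ge_0 | auto].
Qed.

Lemma l2norm_le_pointwise (f : X -> C) c x : l2norm_le X f c -> Cmod (f x) <= c.
Proof. intros H. apply (rl2norm_le_pointwise _ c x H), Cmod_ge_0. Qed.

Lemma l2norm_le_weaken (f : X -> C) c c' : l2norm_le X f c -> c <= c' -> l2norm_le X f c'.
Proof. apply rl2norm_le_weaken. Qed.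

Lemma l2norm_le_add (f g F : X -> C) a b :
  l2norm_le X f a -> l2norm_le X g b ->
  (forall x, Cmod (F x) <= Cmod (f x) + Cmod (g x)) -> l2norm_le X F (a + b).
Proof.
  intros Hf Hg H. apply (rl2norm_le_add _ _ _ a b Hf Hg); try (intros; apply Cmod_ge_0).
  intros x; split; [apply Cmod_ge_0 | auto].
Qed.

Lemma l2_add (f g : X -> C) : l2 X f -> l2 X g -> l2 X (fun x => f x + g x)%C.
Proof.
  intros [a Hf] [b Hg]. exists (a + b). apply (l2norm_le_add f g); auto.
  intros; apply Cmod_triangle.
Qed.

Lemma l2_scal (k : C) (f : X -> C) : l2 X f -> l2 X (fun x => k * f x)%C.
Proof.
  intros [c Hf]. exists (Cmod k * c). apply (l2norm_le_scale f); auto; [apply Cmod_ge_0|].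
  intros; rewrite Cmod_mult; lra.
Qed.

Lemma l2norm_le_zero : l2norm_le X (fun _ => 0%C) 0.
Proof.
  split; [lra|]. intros l _. assert (H : rsumsq (fun _ : X => Cmod 0) l = 0).
  { induction l; simpl; [reflexivity|]. rewrite IHl, Cmod_0. ring. }
  unfold sumsq; fold (rsumsq (fun _ : X => Cmod 0) l). rewrite H; lra.
Qed.

Lemma l2_vsum {A : Type} (F : A -> X -> C) L : (forall i, l2 X (F i)) -> l2 X (vsum F L).
Proof.
  intros HF; induction L as [|i L IH].
  - exists 0; exact l2norm_le_zero.
  - exact (l2_add (F i) (vsum F L) (HF i) IH).
Qed.

Lemma l2norm_le_delta (y : X) : l2norm_le X (delta X y) 1.
Proof.
  split; [lra|]. intros l Hl.
  assert (Hsupp : forall z, z <> y -> Cmod (delta X y z) = 0).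
  { intros z Hz. unfold delta. destruct (excluded_middle_informative (z = y)); [tauto|]. apply Cmod_0. }
  assert (Hy : Cmod (delta X y y) = 1).
  { unfold delta. destruct (excluded_middle_informative (y = y)); [apply Cmod_1 | tauto]. }
  change (rsumsq (fun z => Cmod (delta X y z)) l <= 1 ^ 2). rewrite <- Hy.
  induction Hl as [|z l Hz Hl IH]; simpl; [nra|].
  destruct (classic (z = y)) as [->|Ne]; [|rewrite Hsupp by auto; lra].
  enough (rsumsq (fun z => Cmod (delta X y z)) l = 0) by lra.
  clear IH Hl. induction l as [|z l IHl]; simpl; [reflexivity|].
  rewrite Hsupp, IHl by (simpl in Hz; tauto). ring.
Qed.

Lemma l2_delta (y : X) : l2 X (delta X y).
Proof. exact (l2_intro _ _ (l2norm_le_delta y)). Qed.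

Lemma l2norm_le_expdiag (h : X -> R) t f c :
  l2norm_le X f c -> l2norm_le X (expdiag X h t f) c.
Proof. intros H; apply (l2norm_le_dom f); auto. intros x; unfold expdiag; rewrite Cmod_expi_mult; lra. Qed.

Lemma l2_expdiag (h : X -> R) t f : l2 X f -> l2 X (expdiag X h t f).
Proof. intros [c H]; exists c; apply l2norm_le_expdiag, H. Qed.

Definition tailf (l : list X) (G : X -> C) : X -> C :=
  fun y => if excluded_middle_informative (In y l) then 0%C else G y.

(* Take [l] whose partial sum of [|G|^2] is within [eps^2] of the supremum of all of them. *)
Lemma l2norm_le_tail_small (G : X -> C) c eps :
  l2norm_le X G c -> 0 < eps -> exists l, l2norm_le X (tailf l G) eps.
Proof.
  intros [Hc HG] He.
  set (u := fun y => Cmod (G y)).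
  set (E := fun v => exists l, NoDup l /\ v = rsumsq u l).
  assert (Hb : bound E) by (exists (c ^ 2); intros v [l [Hl ->]]; apply HG; auto).
  assert (Hne : exists v, E v) by (exists 0, nil; split; [constructor | reflexivity]).
  destruct (completeness E Hb Hne) as [S [HS1 HS2]].
  assert (Heps2 : 0 < eps ^ 2) by (apply pow_lt; lra).
  destruct (classic (exists l, NoDup l /\ rsumsq u l > S - eps ^ 2)) as [[l [Hl Hgt]]|Hn].
  2:{ exfalso. enough (S <= S - eps ^ 2) by lra.
      apply HS2. intros v [l [Hl ->]]. apply Rnot_lt_le. intros Hlt. apply Hn; exists l; split; auto. }
  exists l. split; [lra|]. intros l' Hl'.
  set (keep := fun y => if excluded_middle_informative (In y l) then false else true).
  assert (Htail : sumsq X (tailf l G) l' = rsumsq u (filter keep l')).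
  { induction l' as [|z l' IH]; simpl; [reflexivity|].
    rewrite IH by (inversion Hl'; auto). unfold tailf, keep.
    destruct (excluded_middle_informative (In z l)); simpl; [rewrite Cmod_0; ring | reflexivity]. }
  assert (Hnd : NoDup (l ++ filter keep l')).
  { apply NoDup_app; auto; [apply NoDup_filter; auto|].
    intros z Hz Hz'. apply filter_In in Hz' as [_ Hk]. unfold keep in Hk.
    destruct (excluded_middle_informative (In z l)); [discriminate | tauto]. }
  assert (rsumsq u (l ++ filter keep l') <= S) by (apply HS1; eexists; eauto).
  rewrite rsumsq_app in H. rewrite Htail. lra.
Qed.

End ComplexL2.

Section Operators.
Context {X : Type}.

Definition prop_le (d : X -> X -> R) (T : op X) (Rp : R) : Prop :=
  forall x y, T (delta X y) x <> 0%C -> d x y <= Rp.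

Lemma opnorm_le_apply (T : op X) c f m :
  opnorm_le X T c -> l2norm_le X f m -> l2norm_le X (T f) (c * m).
Proof. intros [_ H] Hf. exact (H f m (l2_intro f m Hf) Hf). Qed.

Lemma opnorm_le_weaken (T : op X) c c' : opnorm_le X T c -> c <= c' -> opnorm_le X T c'.
Proof.
  intros [Hc H] Hle. split; [lra|]. intros f m Hf Hm.
  apply (l2norm_le_weaken _ (c * m)); [auto|].
  apply Rmult_le_compat_r; [exact (l2norm_le_ge0 f m Hm) | lra].
Qed.

Lemma opnorm_le_opsub_sym (A B : op X) e :
  opnorm_le X (opsub X A B) e -> opnorm_le X (opsub X B A) e.
Proof.
  intros [He H]. split; auto. intros f m Hf Hm.
  apply (l2norm_le_dom (opsub X A B f)); auto. intros x. unfold opsub.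
  replace (B f x - A f x)%C with (- (A f x - B f x))%C by ring. rewrite Cmod_opp; lra.
Qed.

Lemma opnorm_le_opsub_triangle (A B D : op X) e1 e2 :
  opnorm_le X (opsub X A B) e1 -> opnorm_le X (opsub X B D) e2 ->
  opnorm_le X (opsub X A D) (e1 + e2).
Proof.
  intros [H1 G1] [H2 G2]. split; [lra|]. intros f m Hf Hm.
  rewrite Rmult_plus_distr_r. apply (l2norm_le_add (opsub X A B f) (opsub X B D f)); auto.
  intros x. unfold opsub.
  replace (A f x - D f x)%C with ((A f x - B f x) + (B f x - D f x))%C by ring.
  apply Cmod_triangle.
Qed.

Section BoundedOperator.
Variable b : op X.
Hypothesis Hb : bdd_op X b.

Lemma bdd_op_add f g x : l2 X f -> l2 X g -> b (fun y => f y + g y)%C x = (b f x + b g x)%C.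
Proof. destruct Hb as [H _]. auto. Qed.

Lemma bdd_op_scal k f x : l2 X f -> b (fun y => k * f y)%C x = (k * b f x)%C.
Proof. destruct Hb as [_ [H _]]. auto. Qed.

Lemma bdd_op_zero x : b (fun _ => 0%C) x = 0%C.
Proof.
  replace (fun _ : X => RtoC 0) with (fun y => 0 * delta X x y)%C
    by (apply functional_extensionality; intros; ring).
  rewrite bdd_op_scal; [ring|]. exact (l2_delta x).
Qed.

Lemma bdd_op_sub f g x : l2 X f -> l2 X g -> b (fun y => f y - g y)%C x = (b f x - b g x)%C.
Proof.
  intros Hf Hg. unfold Cminus.
  replace (fun y => f y + - g y)%C with (fun y => f y + (-1) * g y)%C
    by (apply functional_extensionality; intros; ring).
  rewrite bdd_op_add, bdd_op_scal by auto using l2_scal. ring.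
Qed.

Lemma bdd_op_vsum {A : Type} (F : A -> X -> C) L x :
  (forall i, l2 X (F i)) -> b (vsum F L) x = Csum (fun i => b (F i) x) L.
Proof.
  intros HF; induction L as [|i L IH]; [apply bdd_op_zero|].
  change (b (fun y => F i y + vsum F L y)%C x = (b (F i) x + Csum (fun i => b (F i) x) L)%C).
  rewrite bdd_op_add, IH; auto using l2_vsum.
Qed.

Variables (d : X -> X -> R) (Rp : R).
Hypothesis Hprop : prop_le d b Rp.

Lemma prop_le_local_finite (G : X -> C) x l :
  NoDup l -> (forall y, d x y <= Rp -> G y = 0%C) ->
  b (fun y => Csum (fun z => G z * delta X z y) l)%C x = 0%C.
Proof.
  intros Hl HG.
  change (b (vsum (fun z y => G z * delta X z y) l)%C x = 0%C).
  rewrite bdd_op_vsum; [apply Csum_zero|].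
  - intros z _. rewrite bdd_op_scal by apply l2_delta.
    destruct (classic (d x z <= Rp)) as [Hd|Hd]; [rewrite HG by auto; ring|].
    destruct (classic (b (delta X z) x = 0%C)) as [E|E]; [rewrite E; ring|].
    exfalso; apply Hd, Hprop, E.
  - intros z. apply l2_scal, (l2_delta z).
Qed.

(* [G] is approximated in norm by its finitely supported truncations, on which [b]
   acts through its matrix entries. *)
Lemma prop_le_local_zero (G : X -> C) x :
  l2 X G -> (forall y, d x y <= Rp -> G y = 0%C) -> b G x = 0%C.
Proof.
  intros [c HG] HGz. destruct Hb as [_ [_ [cb Hcb]]].
  pose proof (proj1 Hcb) as Hcb0.
  apply Cmod_eq_0, Rle_antisym; [|apply Cmod_ge_0].
  apply Rle_plus_epsilon. intros eps He. rewrite Rplus_0_l.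
  assert (Heps' : 0 < eps / (cb + 1)) by (apply Rdiv_lt_0_compat; lra).
  destruct (l2norm_le_tail_small G c (eps / (cb + 1)) HG Heps') as [l Ht].
  set (l' := nodup (fun u v => excluded_middle_informative (u = v)) l).
  assert (Hl' : NoDup l') by apply NoDup_nodup.
  assert (Hsplit : G = (fun y => Csum (fun z => G z * delta X z y) l' + tailf l G y)%C).
  { apply functional_extensionality; intros y. unfold tailf.
    destruct (excluded_middle_informative (In y l)) as [Hy|Hy].
    - rewrite (Csum_single _ l' y); auto.
      + unfold delta. destruct (excluded_middle_informative (y = y)); [ring | tauto].
      + apply nodup_In; auto.
      + intros z _ Hz. unfold delta. destruct (excluded_middle_informative (y = z)); [congruence|ring].
    - rewrite Csum_zero; [ring|]. intros z Hz. apply nodup_In in Hz.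
      unfold delta. destruct (excluded_middle_informative (y = z)); [subst; tauto | ring]. }
  assert (Htl : l2 X (tailf l G)) by exact (l2_intro _ _ Ht).
  rewrite Hsplit, bdd_op_add, prop_le_local_finite, Cplus_0_l; auto.
  - apply (Rle_trans _ (cb * (eps / (cb + 1)))).
    + apply l2norm_le_pointwise, (opnorm_le_apply b); auto.
    + apply (Rle_trans _ (cb * (eps / (cb + 1)) + eps / (cb + 1))); [lra | right; field; lra].
  - replace (fun y => Csum (fun z => G z * delta X z y) l')%C
      with (vsum (fun z y => G z * delta X z y) l')%C by reflexivity.
    apply l2_vsum. intros z; apply l2_scal, (l2_delta z).
Qed.

Lemma prop_le_local (G1 G2 : X -> C) x :
  l2 X G1 -> l2 X G2 -> (forall y, d x y <= Rp -> G1 y = G2 y) -> b G1 x = b G2 x.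
Proof.
  intros H1 H2 Heq.
  assert (Hdiff : b (fun y => G1 y - G2 y)%C x = 0%C).
  { apply prop_le_local_zero.
    - unfold Cminus. apply l2_add; auto.
      replace (fun y => - G2 y)%C with (fun y => (-1) * G2 y)%C
        by (apply functional_extensionality; intros; ring).
      apply l2_scal; auto.
    - intros y Hy. rewrite Heq by auto. ring. }
  rewrite bdd_op_sub in Hdiff by auto.
  replace (b G1 x) with ((b G1 x - b G2 x) + b G2 x)%C by ring. rewrite Hdiff; ring.
Qed.

End BoundedOperator.
End Operators.

Section Conjugation.
Context {X : Type}.
Variable h : X -> R.

Lemma sigma_act_apply t (a : op X) f x :
  sigma_act X h t a f x = (expi (t * h x) * a (expdiag X h (- t) f) x)%C.
Proof. reflexivity. Qed.

Lemma bdd_op_sigma_act t (a : op X) : bdd_op X a -> bdd_op X (sigma_act X h t a).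
Proof.
  intros Ha. pose proof Ha as [_ [_ [c [Hc0 Hc]]]].
  split; [|split].
  - intros f g Hf Hg x. rewrite !sigma_act_apply.
    replace (expdiag X h (- t) (fun y => f y + g y)%C)
      with (fun y => expdiag X h (- t) f y + expdiag X h (- t) g y)%C
      by (apply functional_extensionality; intros y; unfold expdiag; ring).
    rewrite bdd_op_add by auto using l2_expdiag. ring.
  - intros k f Hf x. rewrite !sigma_act_apply.
    replace (expdiag X h (- t) (fun y => k * f y)%C)
      with (fun y => k * expdiag X h (- t) f y)%C
      by (apply functional_extensionality; intros y; unfold expdiag; ring).
    rewrite bdd_op_scal by auto using l2_expdiag. ring.
  - exists c. split; auto. intros f m Hf Hm.
    apply l2norm_le_expdiag, Hc; auto using l2_expdiag, l2norm_le_expdiag.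
Qed.

Lemma opnorm_le_sigma_act_opsub t (a b : op X) e :
  opnorm_le X (opsub X a b) e ->
  opnorm_le X (opsub X (sigma_act X h t a) (sigma_act X h t b)) e.
Proof.
  intros [He H]. split; auto. intros f m Hf Hm.
  apply (l2norm_le_dom (opsub X a b (expdiag X h (- t) f))).
  - apply H; auto using l2_expdiag, l2norm_le_expdiag.
  - intros x. unfold opsub. rewrite !sigma_act_apply.
    replace (expi (t * h x) * a (expdiag X h (- t) f) x - expi (t * h x) * b (expdiag X h (- t) f) x)%C
      with (expi (t * h x) * (a (expdiag X h (- t) f) x - b (expdiag X h (- t) f) x))%C by ring.
    rewrite Cmod_expi_mult. lra.
Qed.

Lemma prop_le_sigma_act d t (b : op X) Rp :
  bdd_op X b -> prop_le d b Rp -> prop_le d (sigma_act X h t b) Rp.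
Proof.
  intros Hb HR x y Hne. apply HR. intros E. apply Hne.
  rewrite sigma_act_apply.
  replace (expdiag X h (- t) (delta X y)) with (fun z => expi (- t * h y) * delta X y z)%C.
  - rewrite bdd_op_scal, E by auto using l2_delta. ring.
  - apply functional_extensionality; intros z. unfold expdiag, delta.
    destruct (excluded_middle_informative (z = y)) as [->|_]; [reflexivity | ring].
Qed.

Lemma in_Cu_sigma_act d t (a : op X) : in_Cu X d a -> in_Cu X d (sigma_act X h t a).
Proof.
  intros [Ha Happ]. split; [apply bdd_op_sigma_act; auto|].
  intros eps He. destruct (Happ eps He) as [b [Hb [[Rp HR] Hab]]].
  exists (sigma_act X h t b). split; [apply bdd_op_sigma_act; auto|]. split.
  - exists Rp. apply prop_le_sigma_act; auto.
  - apply opnorm_le_sigma_act_opsub; auto.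
Qed.

Lemma bdd_op_opsub (A B : op X) : bdd_op X A -> bdd_op X B -> bdd_op X (opsub X A B).
Proof.
  intros HA HB. pose proof HA as [_ [_ [cA [HcA0 HcA]]]]. pose proof HB as [_ [_ [cB [HcB0 HcB]]]].
  split; [|split].
  - intros f g Hf Hg x. unfold opsub. rewrite !bdd_op_add by auto. ring.
  - intros k f Hf x. unfold opsub. rewrite !bdd_op_scal by auto. ring.
  - exists (cA + cB). split; [lra|]. intros f m Hf Hm.
    rewrite Rmult_plus_distr_r. apply (l2norm_le_add (A f) (B f)); auto.
    intros x. unfold opsub, Cminus. rewrite <- (Cmod_opp (B f x)). apply Cmod_triangle.
Qed.

End Conjugation.

Lemma eq_of_eqmod_abs_lt (a b M : Z) :
  (a mod M = b mod M)%Z -> (Z.abs (a - b) < M)%Z -> a = b.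
Proof.
  intros Hab Hlt.
  assert (HM : (M <> 0)%Z) by lia.
  assert (Hdiv : ((a - b) mod M = 0)%Z)
    by (rewrite Zminus_mod, Hab, Z.sub_diag; apply Zmod_0_l).
  pose proof (Z.div_mod (a - b) M HM) as H. rewrite Hdiv, Z.add_0_r in H.
  destruct (Z.eq_dec ((a - b) / M) 0) as [E|Nq]; [lia|].
  rewrite H, Z.abs_mul in Hlt. nia.
Qed.

Section Residues.
Context {X : Type}.
Variable h : X -> R.

Definition residue_part (M r : Z) (f : X -> C) : X -> C :=
  fun y => if Z.eq_dec (Int_part (h y) mod M) r then f y else 0%C.

Lemma l2norm_le_residue_part M r f c : l2norm_le X f c -> l2norm_le X (residue_part M r f) c.
Proof.
  intros H; apply (l2norm_le_dom f); auto. intros y; unfold residue_part.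
  destruct (Z.eq_dec (Int_part (h y) mod M) r); [lra|]. rewrite Cmod_0; apply Cmod_ge_0.
Qed.

Lemma l2_residue_part M r f : l2 X f -> l2 X (residue_part M r f).
Proof. intros [c H]; exists c; apply l2norm_le_residue_part, H. Qed.

Lemma vsum_residue_part M L f :
  NoDup L -> (forall y, In (Int_part (h y) mod M)%Z L) ->
  vsum (fun r => residue_part M r f) L = f.
Proof.
  intros HL Hall. apply functional_extensionality; intros y. unfold vsum, residue_part.
  rewrite (Csum_single _ L (Int_part (h y) mod M)%Z); auto.
  - destruct (Z.eq_dec _ _); [reflexivity | tauto].
  - intros r _ Hr. destruct (Z.eq_dec _ r); [congruence | reflexivity].
Qed.

Lemma coarse_Int_part_close d : coarse X d h -> forall Rp, exists m : nat,
  forall x y, d x y <= Rp -> (Z.abs (Int_part (h y) - Int_part (h x)) < Z.of_nat m)%Z.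
Proof.
  intros Hh Rp.
  destruct (Hh (Rabs Rp + 1)) as [s [Hs Hsd]]; [pose proof (Rabs_pos Rp); lra|].
  destruct (archimed (s + 1)) as [Hup _].
  assert (Hpos : (0 < up (s + 1))%Z) by (apply lt_IZR; lra).
  exists (Z.to_nat (up (s + 1))). intros x y Hxy. rewrite Z2Nat.id by lia.
  assert (Hhxy : Rabs (h x - h y) < s) by (apply Hsd; pose proof (Rle_abs Rp); lra).
  apply lt_IZR. rewrite abs_IZR, minus_IZR.
  pose proof (base_Int_part (h x)); pose proof (base_Int_part (h y)).
  apply Rabs_def2 in Hhxy. apply Rabs_def1; lra.
Qed.

Section Lipschitz.
Variables (d : X -> X -> R) (b : op X) (Rp : R) (m : nat).
Hypothesis Hb : bdd_op X b.
Hypothesis Hprop : prop_le d b Rp.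
Hypothesis Hclose :
  forall x y, d x y <= Rp -> (Z.abs (Int_part (h y) - Int_part (h x)) < Z.of_nat m)%Z.

Local Notation M := (2 * Z.of_nat m + 1)%Z.

Lemma residue_offset x r : exists k, (Z.abs k <= Z.of_nat m)%Z /\
  forall y, d x y <= Rp -> (Int_part (h y) mod M = r)%Z ->
    Int_part (h y) = (Int_part (h x) + k)%Z.
Proof.
  destruct (classic (exists y0, d x y0 <= Rp /\ (Int_part (h y0) mod M)%Z = r))
    as [[y0 [Hy0 Hr0]]|Hn].
  - exists (Int_part (h y0) - Int_part (h x))%Z. split; [pose proof (Hclose x y0 Hy0); lia|].
    intros y Hy Hr. pose proof (Hclose x y Hy); pose proof (Hclose x y0 Hy0).
    enough (Int_part (h y) = Int_part (h y0)) by lia.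
    apply (eq_of_eqmod_abs_lt _ _ M); [congruence | lia].
  - exists 0%Z. split; [lia|]. intros y Hy Hr. exfalso; eauto.
Qed.

(* On one residue class, [b] only sees the [y] with [⌊h y⌋ = ⌊h x⌋ + k], so the integer
   part of the phase is a constant that factors out. *)
Lemma expdiag_residue_part_local x r : exists k, (Z.abs k <= Z.of_nat m)%Z /\
  forall tau f, l2 X f ->
    b (expdiag X h tau (residue_part M r f)) x =
    (expi (tau * IZR (Int_part (h x) + k)) *
     b (expdiag X (fun y => frac_part (h y)) tau (residue_part M r f)) x)%C.
Proof.
  destruct (residue_offset x r) as [k [Hk Hoff]]. exists k; split; auto.
  intros tau f Hf. pose proof (l2_residue_part M r f Hf) as Hg.
  rewrite <- bdd_op_scal by auto using l2_expdiag.
  apply (prop_le_local b Hb d Rp Hprop); auto using l2_scal, l2_expdiag.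
  intros y Hy. unfold expdiag, residue_part.
  destruct (Z.eq_dec (Int_part (h y) mod M) r) as [Er|]; [|ring].
  rewrite Cmult_assoc, <- expi_add.
  replace (tau * h y) with (tau * IZR (Int_part (h x) + k) + tau * frac_part (h y)); [reflexivity|].
  unfold frac_part. rewrite <- (Hoff y Hy Er). ring.
Qed.

Definition twisted_piece (tau : R) (r : Z) (f : X -> C) : X -> C :=
  b (expdiag X (fun y => frac_part (h y)) (- tau) (residue_part M r f)).

Lemma sigma_act_opsub_residue_le t t0 r f x : l2 X f ->
  Cmod (opsub X (sigma_act X h t b) (sigma_act X h t0 b) (residue_part M r f) x) <=
  Rabs (t - t0) * (INR m + 1) * Cmod (twisted_piece t r f x) +
  Cmod (twisted_piece t r f x - twisted_piece t0 r f x).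
Proof.
  intros Hf. destruct (expdiag_residue_part_local x r) as [k [Hk Hloc]].
  set (th := frac_part (h x) - IZR k).
  assert (Hphase : forall tau,
    sigma_act X h tau b (residue_part M r f) x = (expi (tau * th) * twisted_piece tau r f x)%C).
  { intros tau. rewrite sigma_act_apply, Hloc, Cmult_assoc, <- expi_add by auto.
    unfold twisted_piece, th, frac_part. rewrite plus_IZR.
    replace (tau * h x + - tau * (IZR (Int_part (h x)) + IZR k))
      with (tau * (h x - IZR (Int_part (h x)) - IZR k)) by ring.
    reflexivity. }
  unfold opsub. rewrite !Hphase.
  eapply Rle_trans; [apply Cmod_phase_diff_le|].
  assert (Hth : Rabs th <= INR m + 1).
  { unfold th, Rminus. pose proof (base_fp (h x)).
    assert (Rabs (IZR k) <= INR m)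
      by (rewrite INR_IZR_INZ, <- abs_IZR; apply IZR_le; lia).
    eapply Rle_trans; [apply Rabs_triang|]. rewrite Rabs_Ropp, (Rabs_pos_eq (frac_part _)); lra. }
  apply Rplus_le_compat_r, Rmult_le_compat_r; [apply Cmod_ge_0|].
  apply Rmult_le_compat_l; [apply Rabs_pos | exact Hth].
Qed.

Lemma rl2norm_le_twisted_piece cb t t0 r f nf :
  opnorm_le X b cb -> l2norm_le X f nf ->
  rl2norm_le (fun x => Rabs (t - t0) * (INR m + 1) * Cmod (twisted_piece t r f x) +
                       Cmod (twisted_piece t r f x - twisted_piece t0 r f x))
             (Rabs (t - t0) * (INR m + 2) * cb * nf).
Proof.
  intros Hcb Hf. set (u := Rabs (t - t0)).
  assert (Hu : 0 <= u) by apply Rabs_pos. pose proof (pos_INR m).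
  assert (Hk : 0 <= u * (INR m + 1)) by (apply Rmult_le_pos; lra).
  pose proof (proj1 Hcb) as Hcb0. pose proof (l2norm_le_ge0 f nf Hf) as Hnf.
  pose proof (l2norm_le_residue_part M r f nf Hf) as Hg.
  set (g := residue_part M r f) in *.
  set (e := fun tau => expdiag X (fun y => frac_part (h y)) (- tau) g).
  assert (Hdiff : (fun x => twisted_piece t r f x - twisted_piece t0 r f x)%C =
                  b (fun y => e t y - e t0 y)%C).
  { apply functional_extensionality; intros x. unfold twisted_piece.
    rewrite (bdd_op_sub b Hb) by (apply l2_expdiag, (l2_intro _ _ Hg)). reflexivity. }
  replace (u * (INR m + 2) * cb * nf) with (u * (INR m + 1) * (cb * nf) + cb * (u * nf)) by ring.
  apply (rl2norm_le_add (fun x => u * (INR m + 1) * Cmod (twisted_piece t r f x))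
                        (fun x => Cmod (twisted_piece t r f x - twisted_piece t0 r f x))).
  - apply (rl2norm_le_scale (fun x => Cmod (twisted_piece t r f x))); [| exact Hk |].
    + apply (opnorm_le_apply b), l2norm_le_expdiag; auto.
    + intros x; pose proof (Cmod_ge_0 (twisted_piece t r f x)); split; [nra | lra].
  - change (l2norm_le X (fun x => twisted_piece t r f x - twisted_piece t0 r f x)%C (cb * (u * nf))).
    rewrite Hdiff. apply (opnorm_le_apply b); auto.
    apply (l2norm_le_scale g); auto. intros y. unfold e, expdiag.
    replace (expi (- t * frac_part (h y)) * g y - expi (- t0 * frac_part (h y)) * g y)%C
      with ((expi (- t * frac_part (h y)) - expi (- t0 * frac_part (h y))) * g y)%C by ring.
    rewrite Cmod_mult.
    apply Rmult_le_compat_r; [apply Cmod_ge_0|].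
    eapply Rle_trans; [apply Cmod_expi_sub_le|].
    replace (- t * frac_part (h y) - - t0 * frac_part (h y)) with (- (t - t0) * frac_part (h y)) by ring.
    pose proof (base_fp (h y)).
    rewrite Rabs_mult, Rabs_Ropp, (Rabs_pos_eq (frac_part _)) by lra. fold u. nra.
  - intros x; pose proof (Cmod_ge_0 (twisted_piece t r f x)); nra.
  - intros x; apply Cmod_ge_0.
  - intros x. pose proof (Cmod_ge_0 (twisted_piece t r f x)).
    pose proof (Cmod_ge_0 (twisted_piece t r f x - twisted_piece t0 r f x)). split; [nra | lra].
Qed.

Lemma opnorm_le_sigma_act_opsub_lipschitz cb t t0 :
  opnorm_le X b cb ->
  opnorm_le X (opsub X (sigma_act X h t b) (sigma_act X h t0 b))
    (INR (2 * m + 1) * (INR m + 2) * cb * Rabs (t - t0)).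
Proof.
  intros Hcb. pose proof (proj1 Hcb) as Hcb0. pose proof (pos_INR m). pose proof (pos_INR (2 * m + 1)).
  pose proof (Rabs_pos (t - t0)) as Hu.
  set (L := map Z.of_nat (seq 0 (2 * m + 1))).
  assert (HL : NoDup L)
    by (apply NoDup_map_NoDup_ForallPairs; [intros ? ? _ _ E; lia | apply seq_NoDup]).
  assert (Hall : forall y, In (Int_part (h y) mod M)%Z L).
  { intros y. apply in_map_iff. exists (Z.to_nat (Int_part (h y) mod M)).
    pose proof (Z.mod_pos_bound (Int_part (h y)) M ltac:(lia)).
    split; [lia | apply in_seq; lia]. }
  assert (Hlen : INR (length L) = INR (2 * m + 1)) by (unfold L; rewrite length_map, length_seq; reflexivity).
  assert (Hsub : bdd_op X (opsub X (sigma_act X h t b) (sigma_act X h t0 b)))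
    by (apply bdd_op_opsub; apply bdd_op_sigma_act; exact Hb).
  split; [apply Rmult_le_pos; [repeat apply Rmult_le_pos|]; lra|].
  intros f nf Hfl Hf.
  set (w := fun r x => Rabs (t - t0) * (INR m + 1) * Cmod (twisted_piece t r f x) +
                       Cmod (twisted_piece t r f x - twisted_piece t0 r f x)).
  assert (Hw0 : forall r x, 0 <= w r x).
  { intros r x. unfold w. pose proof (Cmod_ge_0 (twisted_piece t r f x)).
    pose proof (Cmod_ge_0 (twisted_piece t r f x - twisted_piece t0 r f x)).
    assert (0 <= Rabs (t - t0) * (INR m + 1)) by (apply Rmult_le_pos; lra). nra. }
  apply (rl2norm_le_dom (fun x => rsum (fun r => w r x) L)).
  - replace (INR (2 * m + 1) * (INR m + 2) * cb * Rabs (t - t0) * nf)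
      with (INR (length L) * (Rabs (t - t0) * (INR m + 2) * cb * nf)) by (rewrite Hlen; ring).
    apply rl2norm_le_sum; auto.
    + pose proof (l2norm_le_ge0 f nf Hf). repeat apply Rmult_le_pos; lra.
    + intros r _. apply rl2norm_le_twisted_piece; auto.
  - intros x. split; [apply Cmod_ge_0|].
    rewrite <- (vsum_residue_part M L f) at 1 by auto.
    rewrite (bdd_op_vsum _ Hsub) by (intros; apply l2_residue_part; exact Hfl).
    apply Cmod_Csum_le. intros r. apply sigma_act_opsub_residue_le, Hfl.
Qed.

End Lipschitz.
End Residues.

Lemma sigma_act_lipschitz {X : Type} (d : X -> X -> R) (h : X -> R) (b : op X) :
  coarse X d h -> bdd_op X b -> finite_prop X d b ->
  exists K, 0 <= K /\ forall t t0,
    opnorm_le X (opsub X (sigma_act X h t b) (sigma_act X h t0 b)) (K * Rabs (t - t0)).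
Proof.
  intros Hh Hb [Rp Hprop].
  destruct (coarse_Int_part_close h d Hh Rp) as [m Hclose].
  pose proof Hb as [_ [_ [cb Hcb]]]. pose proof (proj1 Hcb). pose proof (pos_INR (2 * m + 1)).
  exists (INR (2 * m + 1) * (INR m + 2) * cb). split.
  - pose proof (pos_INR m). repeat apply Rmult_le_pos; lra.
  - intros t t0. apply (opnorm_le_sigma_act_opsub_lipschitz h d b Rp m); auto.
Qed.


Theorem proposition2p1 (X : Type) (d : X -> X -> R) (h : X -> R)
  (Hd : is_metric X d) (Hulf : ulf X d) (Hh : coarse X d h)
  (a : op X) (Ha : in_Cu X d a) :
  (forall t, in_Cu X d (sigma_act X h t a)) /\
  (forall t0 eps, 0 < eps -> exists del, 0 < del /\
     forall t, Rabs (t - t0) < del ->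
       opnorm_le X (opsub X (sigma_act X h t a) (sigma_act X h t0 a)) eps).
Proof.
  split; [intros t; apply in_Cu_sigma_act, Ha|].
  intros t0 eps He. destruct Ha as [_ Happrox].
  destruct (Happrox (eps / 4)) as [b [Hb [Hfp Hab]]]; [lra|].
  destruct (sigma_act_lipschitz d h b Hh Hb Hfp) as [K [HK Hlip]].
  exists (eps / (2 * (K + 1))). split; [apply Rdiv_lt_0_compat; lra|].
  intros t Ht.
  assert (HKt : K * Rabs (t - t0) <= eps / 2).
  { apply (Rle_trans _ ((K + 1) * (eps / (2 * (K + 1))))); [|right; field; lra].
    pose proof (Rabs_pos (t - t0)). nra. }
  replace eps with (eps / 4 + (eps / 2 + eps / 4)) by field.
  apply (opnorm_le_opsub_triangle _ (sigma_act X h t b)); [apply opnorm_le_sigma_act_opsub, Hab|].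
  apply (opnorm_le_opsub_triangle _ (sigma_act X h t0 b)).
  - apply (opnorm_le_weaken _ _ _ (Hlip t t0) HKt).
  - apply opnorm_le_sigma_act_opsub, opnorm_le_opsub_sym, Hab.
Qed.
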